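(* If $G$ is a graph on $n$ vertices with independence number $\alpha\geq 1$, then $\operatorname{th}_{\operatorname{H}}(G)\leq\lceil n-\alpha+2\sqrt{\alpha}-1\rceil$.
   Context: All graphs are finite, simple and undirected. Hopping color change rule: a blue vertex $v$ may force a white vertex $w$ to become blue if $v$ has not previously performed a force and every neighbor of $v$ is blue. For an initial blue set $B$, a chronological list of forces of $B$ is a sequence of such forces applied one at a time until no further force is possible; its underlying unordered set is a set of forces of $B$. $B$ is a hopping forcing set if some chronological list of forces of $B$ turns all vertices blue. For a set of forces $\mathcal F$ of $B$, let $\mathcal F^{(0)}=B$ and for $t\geq1$ let $\mathcal F^{(t)}$ be the set of vertices $w\notin U_{t-1}:=\bigcup_{i=0}^{t-1}\mathcal F^{(i)}$ for which there is $(v\to w)\in\mathcal F$ with $v\in U_{t-1}$ and all neighbors of $v$ in $U_{t-1}$. $\operatorname{pt}_{\operatorname{H}}(G;\mathcal F)$ is the least $t$ with $\bigcup_{i=0}^t\mathcal F^{(i)}=V(G)$ ($\infty$ if none); $\operatorname{pt}_{\operatorname{H}}(G;B)$ is the minimum of $\operatorname{pt}_{\operatorname{H}}(G;\mathcal F)$ over sets of forces $\mathcal F$ of $B$ ($\infty$ if $B$ is not a hopping forcing set). $\operatorname{th}_{\operatorname{H}}(G)=\min_{B\subseteq V(G)}\big(|B|+\operatorname{pt}_{\operatorname{H}}(G;B)\big)$. *)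

From HB Require Import structures.
From mathcomp Require Import all_boot all_order all_algebra.
From mathcomp Require Import reals.
From Stdlib Require Import ClassicalEpsilon.
Set Implicit Arguments. Unset Strict Implicit. Unset Printing Implicit Defensive.

Section Hopping.
Variables (T : finType) (e : rel T).

Definition simple_graph : Prop := symmetric e /\ irreflexive e.

Definition independent (S : {set T}) : bool :=
  [forall x in S, forall y in S, ~~ e x y].
Definition alpha : nat := \max_(S : {set T} | independent S) #|S|.

(* In state (U = blue vertices, S = vertices that already performed a force),
   v may force w under the hopping rule. *)
Definition can_force (U S : {set T}) (v w : T) : bool :=
  [&& v \in U, w \notin U, v \notin S & [forall u, e v u ==> (u \in U)]].

Fixpoint chron (U S : {set T}) (s : seq (T * T)) : bool :=
  match s with
  | [::] => ~~ [exists v, exists w, can_force U S v w]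
  | (v, w) :: s' => can_force U S v w && chron (w |: U) (v |: S) s'
  end.

Definition chronological_list (B : {set T}) (s : seq (T * T)) : bool :=
  chron B set0 s.

Definition forces_set (B : {set T}) (F : {set T * T}) : Prop :=
  exists s, chronological_list B s /\ F = [set x in s].

Definition hopping_forcing_set (B : {set T}) : Prop :=
  exists s, chronological_list B s /\
    B :|: [set w | w \in [seq x.2 | x <- s]] = [set: T].

(* U_t = F^(0) ∪ ... ∪ F^(t) *)
Fixpoint Ublue (B : {set T}) (F : {set T * T}) (t : nat) : {set T} :=
  match t with
  | 0 => B
  | t'.+1 =>
      let U := Ublue B F t' in
      U :|: [set w | (w \notin U) &&
               [exists v, [&& (v, w) \in F, v \in U &
                              [forall u, e v u ==> (u \in U)]]]]
  end.

End Hopping.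

(* least element of a (nonempty) set of naturals; chosen classically *)
Definition nmin (P : nat -> Prop) : nat :=
  epsilon (inhabits 0) (fun n => P n /\ forall m, P m -> n <= m).

(* pt_H(G;F) (meaningful when finite) *)
Definition pt_forces (T : finType) (e : rel T) (B : {set T}) (F : {set T * T}) : nat :=
  nmin (fun t => Ublue e B F t = [set: T]).

Definition pt_forces_finite (T : finType) (e : rel T) (B : {set T}) (F : {set T * T}) : Prop :=
  exists t, Ublue e B F t = [set: T].

(* pt_H(G;B): minimum over sets of forces F of B with finite pt_H(G;F)
   (meaningful when B is a hopping forcing set) *)
Definition pt_H (T : finType) (e : rel T) (B : {set T}) : nat :=
  nmin (fun t => exists F, forces_set e B F /\ pt_forces_finite e B F /\
                           t = pt_forces e B F).

(* th_H(G) = min over B (with pt_H(G;B) finite, i.e. hopping forcing sets)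
   of |B| + pt_H(G;B) *)
Definition th_H (T : finType) (e : rel T) : nat :=
  nmin (fun k => exists B : {set T}, hopping_forcing_set e B /\ k = #|B| + pt_H e B).

(* Take a maximum independent set S, with a = |S|, enumerate it as s_0, ..., s_(a-1), and
   colour blue everything outside S together with s_0, ..., s_(k-1).  All neighbours of a
   vertex of S lie outside S, so each s_j may hop-force s_(j+k) as soon as it is blue; in
   round t the vertices s_(tk), ..., s_((t+1)k-1) turn blue, and a <= k(t+1) rounds
   suffice.  Hence th_H(G) <= n - a + k + t, and for k = ceil(sqrt a) one can choose t
   with (k + t)^2 < 4a, i.e. k + t < 2 sqrt a. *)
From HB Require Import structures.
From mathcomp Require Import all_boot all_order all_algebra.
From mathcomp Require Import reals zify.
From Stdlib Require Import ClassicalEpsilon Classical Wf_nat.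
Import Order.TTheory GRing.Theory Num.Theory.
Set Implicit Arguments. Unset Strict Implicit. Unset Printing Implicit Defensive.

Lemma nmin_le (P : nat -> Prop) n : P n -> nmin P <= n.
Proof.
move=> Pn; have [m [[Pm m_min] _]] :=
  dec_inh_nat_subset_has_unique_least_element _ (fun k => classic (P k)) (ex_intro _ n Pn).
have m_least : P m /\ forall k, P k -> m <= k by split=> // k /m_min/ssrnat.leP.
by have [_ ->] := epsilon_spec (inhabits 0) (fun k => P k /\ forall m, P m -> k <= m)
  (ex_intro _ m m_least).
Qed.

Section Throttling.
Variables (T : finType) (e : rel T).

Lemma Ublue_sub B s t :
  Ublue e B [set x in s] t \subset B :|: [set w | w \in [seq x.2 | x <- s]].
Proof.
elim: t => [|t IH] /=; first exact: subsetUl.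
rewrite subUset IH; apply/subsetP => w.
rewrite !inE => /andP[_ /existsP[v /and3P[vw_in _ _]]].
by apply/orP; right; apply/mapP; exists (v, w); rewrite // inE in vw_in.
Qed.

Lemma th_H_le B s t :
  chronological_list e B s -> Ublue e B [set x in s] t = [set: T] ->
  th_H e <= #|B| + t.
Proof.
move=> chron_s Ublue_t.
have forcing_B : hopping_forcing_set e B.
  by exists s; split=> //; apply/eqP; rewrite eqEsubset subsetT -Ublue_t Ublue_sub.
have pt_s : pt_forces e B [set x in s] <= t by exact: nmin_le.
have pt_B : pt_H e B <= t.
  apply: leq_trans pt_s; apply: nmin_le.
  by exists [set x in s]; split; [exists s | split; [exists t |]].
by apply: leq_trans (nmin_le (ex_intro _ B (conj forcing_B erefl))) _; rewrite leq_add2l.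
Qed.

End Throttling.

Section IndependentChain.
Variables (T : finType) (e : rel T) (S : {set T}) (x0 : T) (k : nat).
Hypothesis S_indep : independent e S.
Hypothesis k_gt0 : 0 < k.

Let s := enum S.
Let a := #|S|.

Let size_s : size s = a. Proof. by rewrite /s /a cardE. Qed.
Let index_nth i : i < a -> index (nth x0 s i) s = i.
Proof. by move=> ?; apply: index_uniq; rewrite ?size_s ?enum_uniq. Qed.
Let nth_in i : i < a -> nth x0 s i \in S.
Proof. by move=> ?; rewrite -mem_enum mem_nth ?size_s. Qed.
Let index_notin x : x \notin S -> index x s = a.
Proof. by move=> ?; rewrite -size_s memNindex ?mem_enum. Qed.
Let index_in x : x \in S -> index x s < a.
Proof. by move=> ?; rewrite -size_s index_mem mem_enum. Qed.
Let nth_index_in x : x \in S -> nth x0 s (index x s) = x.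
Proof. by move=> ?; rewrite nth_index ?mem_enum. Qed.

Lemma independent_nbr_notin v u : v \in S -> e v u -> u \notin S.
Proof.
move=> vS evu; apply/negP => uS.
by move/forallP/(_ v): S_indep; rewrite vS => /forallP/(_ u); rewrite uS evu.
Qed.

(* The state after the forces s_j -> s_(j+k), j < m: the blue vertices and the
   vertices that have already forced. *)
Definition chain_blue m := [set x | (x \notin S) || (index x s < m + k)].
Definition chain_forced m := [set x | index x s < m].
Definition chain_forces m d := [seq (nth x0 s j, nth x0 s (j + k)) | j <- iota m d].

Lemma chain_blueS m : m + k < a -> nth x0 s (m + k) |: chain_blue m = chain_blue m.+1.
Proof.
move=> mk_lt; apply/setP => x; rewrite !inE addSn ltnS.
case: (boolP (x \in S)) => xS /=; last by rewrite orbT.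
rewrite [in RHS]leq_eqVlt; congr (_ || _).
by apply/eqP/eqP => [->|<-]; rewrite ?index_nth ?nth_index_in.
Qed.

Lemma chain_forcedS m : m < a -> nth x0 s m |: chain_forced m = chain_forced m.+1.
Proof.
move=> m_lt; apply/setP => x; rewrite !inE ltnS [in RHS]leq_eqVlt; congr (_ || _).
apply/eqP/eqP => [->|idx_x]; first by rewrite index_nth.
case: (boolP (x \in S)) => xS; first by rewrite -idx_x nth_index_in.
by move: m_lt; rewrite -idx_x index_notin ?ltnn.
Qed.

Lemma chron_chain_forces m d :
  m + k + d = a -> chron e (chain_blue m) (chain_forced m) (chain_forces m d).
Proof.
elim: d m => [|d IH] m mkd_eq /=.
  apply/negP => /existsP[v /existsP[w /and4P[_]]].
  by rewrite inE negb_or negbK => /andP[/index_in w_lt w_late] _ _; lia.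
have mk_lt : m + k < a by lia.
have m_lt : m < a by lia.
rewrite chain_blueS // chain_forcedS // (IH m.+1) ?andbT; last by lia.
apply/and4P; split.
- by rewrite inE index_nth //; apply/orP; right; lia.
- by rewrite inE negb_or negbK nth_in // index_nth // ltnn.
- by rewrite inE index_nth // ltnn.
- by apply/forallP => u; apply/implyP => /(independent_nbr_notin (nth_in m_lt)) u_out;
    rewrite inE u_out.
Qed.

Lemma chron_chain : k <= a -> chronological_list e (chain_blue 0) (chain_forces 0 (a - k)).
Proof. by move=> ?; apply: chron_chain_forces; lia. Qed.

Lemma chain_blue_round t x : (x \notin S) || (index x s < k * t.+1) ->
  x \in Ublue e (chain_blue 0) [set y in chain_forces 0 (a - k)] t.
Proof.
elim: t x => [|t IH] x /=; first by rewrite muln1 inE.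
move=> x_early; rewrite inE; case x_blue: (x \in _) => //=.
have xS : x \in S by apply: contraFT x_blue => x_out; rewrite IH ?x_out.
have idx_ge : k * t.+1 <= index x s.
  by rewrite leqNgt; apply: contraFN x_blue => idx_lt; rewrite IH ?idx_lt ?orbT.
rewrite xS /= in x_early; have idx_lt := index_in xS.
set j := index x s - k; have j_lt : j < a by lia.
rewrite inE x_blue; apply/existsP; exists (nth x0 s j); apply/and3P; split.
- rewrite inE; apply/mapP; exists j; first by rewrite mem_iota; lia.
  by rewrite subnK ?nth_index_in //; lia.
- by apply: IH; rewrite index_nth //; apply/orP; right; lia.
- apply/forallP => u; apply/implyP => /(independent_nbr_notin (nth_in j_lt)) u_out.
  by apply: IH; rewrite u_out.
Qed.

Lemma Ublue_chain t : a <= k * t.+1 ->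
  Ublue e (chain_blue 0) [set y in chain_forces 0 (a - k)] t = [set: T].
Proof.
move=> a_le; apply/setP => x; rewrite inE; apply: chain_blue_round.
by case: (boolP (x \in S)) => //= /index_in; lia.
Qed.

Lemma card_chain_blue : #|chain_blue 0| <= #|~: S| + k.
Proof.
have blue_sub : chain_blue 0 \subset ~: S :|: [set nth x0 s i | i : 'I_k].
  apply/subsetP => x; rewrite !inE; case: (boolP (x \in S)) => //= xS idx_lt.
  by apply/imsetP; exists (Ordinal idx_lt); rewrite ?nth_index_in.
apply: leq_trans (subset_leq_card blue_sub) _.
apply: leq_trans (leq_card_setU _ _) _; rewrite leq_add2l.
by apply: leq_trans (leq_imset_card _ _) _; rewrite card_ord.
Qed.

End IndependentChain.

Lemma th_H_le_independent (T : finType) (e : rel T) (S : {set T}) k t :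
  independent e S -> 0 < k <= #|S| -> #|S| <= k * t.+1 ->
  th_H e <= #|T| - #|S| + k + t.
Proof.
move=> S_indep /andP[k_gt0 k_le] S_le.
have [x0 _] : exists x, x \in S by apply/set0Pn; rewrite -card_gt0; lia.
have := th_H_le (chron_chain x0 S_indep k_gt0 k_le) (Ublue_chain x0 S_indep k_gt0 S_le).
have := card_chain_blue S x0 k; have := cardsC S; lia.
Qed.

(* k is the least integer with a <= k^2, so (k - 1)^2 < a; then t = k - 2 or t = k - 1
   according to whether a <= k (k - 1). *)
Lemma exists_rounds_sqr_lt a : 0 < a ->
  exists k t, [/\ 0 < k <= a, a <= k * t.+1 & (k + t) * (k + t) < 4 * a].
Proof.
move=> a_gt0; have : exists k, a <= k * k by exists a; nia.
case/ex_minnP => k a_le k_min.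
have k_gt0 : 0 < k by case: k a_le {k_min}; lia.
have k_le : k <= a by have := k_min a ltac:(nia); lia.
have sqr_lt : (k - 1) * (k - 1) < a.
  by rewrite ltnNge; apply/negP => /k_min; lia.
exists k; case: (leqP a (k * (k - 1))) => a_kk1.
  have k_ge2 : 1 < k by case: k a_kk1 {k_min a_le sqr_lt k_le k_gt0} => [|[|]]; lia.
  by exists (k - 2); split; [lia | rewrite -subSn //; lia | nia].
by exists (k - 1); split; [lia | rewrite subn1 prednK | nia].
Qed.

Section CeilBound.
Local Open Scope ring_scope.

Lemma ceil_ge_sqr_lt (R : realType) (n a m : nat) :
  (a <= n)%N -> (m * m < 4 * a)%N ->
  (n - a + m)%N%:Z <= Num.ceil (n%:R - a%:R + 2 * Num.sqrt (a%:R) - 1 : R).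
Proof.
move=> a_le mm_lt.
suff : (n - a + m)%N%:Z - 1 < Num.ceil (n%:R - a%:R + 2 * Num.sqrt (a%:R) - 1 : R) by lia.
rewrite ceil_gt_int rmorphB /= -[(_ + _)%N%:Z%:~R]/((_ + _)%N%:R) natrD natrB //.
suff : m%:R < 2 * Num.sqrt (a%:R : R) by rewrite rmorph1 ltrD2r ltrD2l.
have two_sqrt_ge0 : 0 <= 2 * Num.sqrt (a%:R : R) by rewrite mulr_ge0 ?sqrtr_ge0.
rewrite ltNge; apply/negP => /[dup] /(ler_pM two_sqrt_ge0 two_sqrt_ge0) /[apply].
rewrite mulrACA -[X in _ * X]expr2 sqr_sqrtr // -!natrM ler_nat; lia.
Qed.

End CeilBound.

Theorem proposition3p10 (R : realType) (T : finType) (e : rel T) :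
  simple_graph e -> (1 <= alpha e)%N ->
  ((th_H e)%:Z <=
     Num.ceil (#|T|%:R - (alpha e)%:R + 2 * Num.sqrt ((alpha e)%:R) - 1 : R))%R.
Proof.
move=> _ alpha_gt0.
have [S S_indep alphaE] : {S : {set T} | S \in [pred S | independent e S] & alpha e = #|S|}.
  apply: eq_bigmax_cond; apply/card_gt0P; exists set0.
  by rewrite inE; apply/forallP => x; rewrite inE.
rewrite alphaE in alpha_gt0 *.
have [k [t [k_range S_le sqr_lt]]] := exists_rounds_sqr_lt alpha_gt0.
apply: le_trans (ceil_ge_sqr_lt R (max_card _) sqr_lt); rewrite lez_nat addnA.
exact: th_H_le_independent.
Qed.
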